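(* Let $q=4$ and let $k\ge 1$ be an integer. Let $S_{2k}=x+x^{4}+x^{4^2}+\cdots+x^{4^{2k-1}}\in\mathbb{F}_2[x]$. Then the polynomial \[ g(x)=x+S_{2k}(x)^{q^{2k}}+S_{2k}(x)^{q^k+3} \] is a permutation polynomial of $\mathbb{F}_{q^{3k}}=\mathbb{F}_{4^{3k}}$, i.e. the map $x\mapsto g(x)$ is a bijection of $\mathbb{F}_{4^{3k}}$.
   Context: $\mathbb{F}_m$ denotes the finite field with $m$ elements. A polynomial $f\in\mathbb{F}_m[x]$ is a permutation polynomial (PP) of $\mathbb{F}_m$ if the induced map $\mathbb{F}_m\to\mathbb{F}_m$, $x\mapsto f(x)$, is a bijection. *)

From HB Require Import structures.
From mathcomp Require Import all_boot all_order all_algebra all_field.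
Set Implicit Arguments. Unset Strict Implicit. Unset Printing Implicit Defensive.
Import GRing.Theory.
Local Open Scope ring_scope.

(* S_{2k} = x + x^4 + x^(4^2) + ... + x^(4^(2k-1)), viewed in F[x]
   (its coefficients lie in the prime field F_2). *)
Definition S_poly (F : fieldType) (k : nat) : {poly F} :=
  \sum_(i < 2 * k) 'X^(4 ^ i)%N.

Definition g_poly (F : fieldType) (k : nat) : {poly F} :=
  'X + S_poly F k ^+ (4 ^ (2 * k))%N + S_poly F k ^+ (4 ^ k + 3)%N.

Definition is_perm_poly (F : finFieldType) (f : {poly F}) : Prop :=
  bijective (fun x : F => f.[x]).

From HB Require Import structures.
From mathcomp Require Import all_boot all_order all_algebra all_field.
From mathcomp Require Import ring.

(* Put Q = 4^k and sigma(y) = y^Q; on F = F_{Q^3} sigma is an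
   automorphism of order 3, with norm N(y) = y sigma(y) sigma^2(y) and trace
   T(y) = y + sigma(y) + sigma^2(y).  Write S = S_{2k} as a function on F.
   1. In characteristic 2, y |-> y^(4^n) is additive; hence S(x)^4 + S(x)
      telescopes to x^(Q^2) + x, and T(S(x)) = S(T(x)) = 0 because T(x) is
      fixed by sigma, so the two halves of the sum S_{2k}(T(x)) coincide.
   2. Using sigma^2(y) = y + sigma(y) for y = S(x), a ring identity shows
      g(x)^(Q^2) + g(x) = P(S(x)), where P(y) = y sigma(y)^2 sigma^2(y).
   3. P is injective: sigma^2(P(y)) = y N(y), and N(y N(y)) = N(y)^4
      determines N(y), hence y.
   So g(x) = g(z) forces S(x) = S(z), and then x = z since
   g(x) = x + (a function of S(x)); an injective map of a finite set is
   bijective. *)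

Set Implicit Arguments. Unset Strict Implicit. Unset Printing Implicit Defensive.
Import GRing.Theory.
Local Open Scope ring_scope.

Section CharacteristicTwo.
Variable F : fieldType.
Hypothesis F_char2 : 2%N \in [pchar F].

Lemma exp4nD (n : nat) (u v : F) :
  (u + v) ^+ (4 ^ n) = u ^+ (4 ^ n) + v ^+ (4 ^ n).
Proof.
apply: exprDn_pchar; rewrite (eq_pnat _ (pcharf_eq F_char2)) pnatX.
by apply/orP; left.
Qed.

Lemma exp4n_sum (n : nat) (I : Type) (r : seq I) (P : pred I) (f : I -> F) :
  (\sum_(i <- r | P i) f i) ^+ (4 ^ n) = \sum_(i <- r | P i) f i ^+ (4 ^ n).
Proof.
apply: (big_morph (fun v : F => v ^+ (4 ^ n))); first exact: exp4nD.
by rewrite expr0n expn_eq0.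
Qed.

(* It is also injective, since u^(4^n) = v^(4^n) gives (u + v)^(4^n) = 0. *)
Lemma exp4n_inj (n : nat) : injective (fun u : F => u ^+ (4 ^ n)).
Proof.
move=> u v /= Euv.
have /eqP : (u + v) ^+ (4 ^ n) = 0 by rewrite exp4nD Euv addrr_pchar2.
rewrite expf_eq0 => /andP[_]; rewrite addr_eq0 oppr_pchar2 //.
exact: eqP.
Qed.

Definition S_fun (m : nat) (x : F) : F := \sum_(i < m) x ^+ (4 ^ i).

Lemma S_funD (m : nat) (u v : F) : S_fun m (u + v) = S_fun m u + S_fun m v.
Proof. by rewrite /S_fun -big_split; apply: eq_bigr => i _; rewrite exp4nD. Qed.

Lemma S_fun_exp4n (m n : nat) (x : F) :
  S_fun m x ^+ (4 ^ n) = S_fun m (x ^+ (4 ^ n)).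
Proof.
rewrite /S_fun exp4n_sum; apply: eq_bigr => i _.
by rewrite -!exprM mulnC.
Qed.

Lemma S_fun_telescope (m : nat) (x : F) :
  S_fun m x ^+ 4 + S_fun m x = x ^+ (4 ^ m) + x.
Proof.
rewrite -{1}[4%N]expn1 S_fun_exp4n /S_fun -big_split /=.
rewrite -(big_mkord xpredT (fun i => (x ^+ (4 ^ 1)) ^+ (4 ^ i) + x ^+ (4 ^ i))).
rewrite (telescope_sumr_eq (fun i => x ^+ (4 ^ i))) //.
  by rewrite expn0 expr1 oppr_pchar2.
by move=> i _; rewrite oppr_pchar2 // -exprM expn1 -expnS.
Qed.

(* The polynomial identity behind step 2 of the proof, with a = y,
   b = sigma(y), c = x^(Q^2) and sigma^2(y) already replaced by a + b. *)
Lemma conjugate_sum_identity (a b c x : F) : c + x = a ^+ 4 + a ->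
  (c + b + a * (a + b) ^+ 3) + (x + (a + b) + b * a ^+ 3)
  = a * b ^+ 2 * (a + b).
Proof.
move=> Ecx.
have -> : (c + b + a * (a + b) ^+ 3) + (x + (a + b) + b * a ^+ 3) =
          a * b ^+ 2 * (a + b)
          + 2%:R * (a ^+ 4 + a + b + a ^+ 3 * b *+ 2 + a ^+ 2 * b ^+ 2)
          + (c + x - (a ^+ 4 + a)) by ring.
by rewrite Ecx subrr (pcharf0 F_char2) mul0r !addr0.
Qed.

End CharacteristicTwo.

Section OrderThreeAutomorphism.
Variable F : fieldType.
Hypothesis F_char2 : 2%N \in [pchar F].
Variable sigma : {rmorphism F -> F}.
Hypothesis sigma3 : forall y : F, sigma (sigma (sigma y)) = y.

Definition trace (y : F) : F := y + sigma y + sigma (sigma y).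
Definition norm (y : F) : F := y * sigma y * sigma (sigma y).

Lemma sigma_trace (y : F) : sigma (trace y) = trace y.
Proof. by rewrite /trace !rmorphD sigma3 addrC addrA. Qed.

Lemma sigma_norm (y : F) : sigma (norm y) = norm y.
Proof. by rewrite /norm !rmorphM sigma3 mulrC mulrA. Qed.

Lemma normM (u v : F) : norm (u * v) = norm u * norm v.
Proof. rewrite /norm !rmorphM; ring. Qed.

Lemma norm_eq0 (y : F) : norm y = 0 -> y = 0.
Proof. by move/eqP; rewrite /norm !mulf_eq0 !fmorph_eq0 -!orbA !orbb => /eqP. Qed.

(* P(y) = y sigma(y)^2 sigma^2(y); for sigma(y) = y^Q this is y^(1+2Q+Q^2). *)
Definition P (y : F) : F := y * sigma y ^+ 2 * sigma (sigma y).

(* P is injective: sigma^2(P(y)) = y N(y) and N(y N(y)) = N(y)^4, so P(y)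
   determines N(y) (fourth powers are injective in characteristic 2),
   and then y. *)
Lemma P_inj : injective P.
Proof.
have sigma2_P y : sigma (sigma (P y)) = y * norm y.
  by rewrite /P /norm !rmorphM !sigma3; ring.
have norm_yN y : norm (y * norm y) = norm y ^+ 4.
  have sigma_N := sigma_norm y.
  by rewrite normM {2}/norm !sigma_N; ring.
move=> y w Pyw.
have yNw : y * norm y = w * norm w by rewrite -!sigma2_P Pyw.
have Nyw : norm y = norm w.
  by apply: (@exp4n_inj _ F_char2 1); rewrite /= expn1 -!norm_yN yNw.
have [Ny0|Ny_neq0] := eqVneq (norm y) 0.
  by rewrite (norm_eq0 Ny0) (norm_eq0 (etrans (esym Nyw) Ny0)).
by apply: (mulIf Ny_neq0); rewrite {2}Nyw.
Qed.

(* The shape of g(x) = x + y^(Q^2) + y^Q y^3 in terms of y = S(x). *)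
Definition g_form (x y : F) : F := x + sigma (sigma y) + sigma y * y ^+ 3.

Lemma g_form_sigma2 (x y : F) :
  trace y = 0 -> sigma (sigma x) + x = y ^+ 4 + y ->
  sigma (sigma (g_form x y)) + g_form x y = P y.
Proof.
move=> trace_y0 Ex.
have sigma2_y : sigma (sigma y) = y + sigma y.
  by apply/eqP; rewrite -subr_eq0 oppr_pchar2 // addrC -/(trace y) trace_y0.
rewrite /g_form /P !rmorphD !rmorphM !sigma3 sigma2_y.
rewrite -(conjugate_sum_identity F_char2 _ Ex); ring.
Qed.
End OrderThreeAutomorphism.

Section FrobeniusPower.
Variable F : fieldType.
Hypothesis F_char2 : 2%N \in [pchar F].
Variable k : nat.
(* F is (a subfield of) the field of order Q^3, Q = 4^k. *)
Hypothesis exp4n_3k : forall x : F, x ^+ (4 ^ (3 * k)) = x.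

Definition frobQ (y : F) : F := y ^+ (4 ^ k).

Lemma frobQ_is_nmod_morphism : nmod_morphism frobQ.
Proof. by split=> [|u v]; [rewrite /frobQ expr0n expn_eq0 | exact: exp4nD]. Qed.

Lemma frobQ_is_monoid_morphism : monoid_morphism frobQ.
Proof. by split=> [|u v]; [exact: expr1n | exact: exprMn]. Qed.

HB.instance Definition _ := GRing.isNmodMorphism.Build F F frobQ
  frobQ_is_nmod_morphism.
HB.instance Definition _ := GRing.isMonoidMorphism.Build F F frobQ
  frobQ_is_monoid_morphism.

Lemma frobQ2E (y : F) : frobQ (frobQ y) = y ^+ (4 ^ (2 * k)).
Proof. by rewrite /frobQ -exprM -expnD addnn -mul2n. Qed.

Lemma frobQ3 (y : F) : frobQ (frobQ (frobQ y)) = y.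
Proof. by rewrite frobQ2E /frobQ -exprM -expnD -mulSn exp4n_3k. Qed.

Lemma S_fun_frobQ (m : nat) (x : F) : frobQ (S_fun m x) = S_fun m (frobQ x).
Proof. exact: S_fun_exp4n. Qed.

(* S_{2k} annihilates the fixed field F_Q of frobQ: its two halves agree. *)
Lemma S_fun_fixed (t : F) : frobQ t = t -> S_fun (2 * k) t = 0.
Proof.
move=> frobQ_t; rewrite /S_fun mul2n -addnn big_split_ord /=.
have -> : \sum_(i < k) t ^+ (4 ^ (k + i)) = \sum_(i < k) t ^+ (4 ^ i).
  by apply: eq_bigr => i _; rewrite expnD exprM -/(frobQ t) frobQ_t.
exact: addrr_pchar2.
Qed.

Lemma trace_S_fun (x : F) : trace frobQ (S_fun (2 * k) x) = 0.
Proof.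
have -> : trace frobQ (S_fun (2 * k) x) = S_fun (2 * k) (trace frobQ x).
  by rewrite /trace /= !S_fun_frobQ !(S_funD F_char2).
apply: S_fun_fixed; exact: sigma_trace frobQ3 x.
Qed.

Definition G (x : F) : F :=
  x + S_fun (2 * k) x ^+ (4 ^ (2 * k)) + S_fun (2 * k) x ^+ (4 ^ k + 3).

Lemma g_poly_eval (x : F) : (g_poly F k).[x] = G x.
Proof.
rewrite /g_poly !hornerD hornerX !horner_exp /S_poly horner_sum.
by under eq_bigr do rewrite hornerXn.
Qed.

Lemma G_g_form (x : F) : G x = g_form frobQ x (S_fun (2 * k) x).
Proof. by rewrite /G /g_form /= frobQ2E exprD. Qed.

(* g(x) = g(z) gives P(S(x)) = P(S(z)) by step 2, hence S(x) = S(z), and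
   then x = z. *)
Lemma G_inj : injective G.
Proof.
have G_frobQ2 x : frobQ (frobQ (G x)) + G x = P frobQ (S_fun (2 * k) x).
  rewrite G_g_form; apply: g_form_sigma2 => //.
  - exact: frobQ3.
  - exact: trace_S_fun.
  - by rewrite /= frobQ2E S_fun_telescope.
move=> x z Gxz.
have Sxz : S_fun (2 * k) x = S_fun (2 * k) z.
  by apply: (P_inj F_char2 frobQ3); rewrite -!G_frobQ2 Gxz.
by move: Gxz; rewrite /G Sxz => /addIr /addIr.
Qed.
End FrobeniusPower.

Theorem theorem1p1 (F : finFieldType) (k : nat) :
  (0 < k)%N -> #|F| = (4 ^ (3 * k))%N -> is_perm_poly (g_poly F k).
Proof.
move=> _ cardF.
have F_char2 : 2%N \in [pchar F].
  apply: (@card_finPcharP F 2 (6 * k)) => //.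
  by rewrite cardF -[4%N]/(2 ^ 2)%N -expnM mulnA.
have exp4n_3k (x : F) : x ^+ (4 ^ (3 * k)) = x by rewrite -cardF expf_card.
apply: injF_bij => x z /=; rewrite !g_poly_eval.
exact: (@G_inj F F_char2 k exp4n_3k).
Qed.
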